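(* For every $b\in\mathbb F_{3^{2m}}$, the vector $(\mathrm{Tr}_{2m}(bt))_{t\in\mathbb F_{3^{2m}}}$ belongs to $\mathcal C_3(\mathbb D_d)$.
   Context: Let $m\ge 2$ be an integer. For $s\in\{m,2m\}$ let $\mathrm{Tr}_s:\mathbb F_{3^s}\to\mathbb F_3$ denote the absolute trace. Vectors in $\mathbb F_3^{3^{2m}}$ are indexed by $\mathbb F_{3^{2m}}$, and a function $f:\mathbb F_{3^{2m}}\to\mathbb F_3$ is identified with $(f(t))_{t\in\mathbb F_{3^{2m}}}$. Let $\mathcal C(2m,3)=\{(\mathrm{Tr}_{2m}(at^{3^m+1}+bt)+h)_{t\in\mathbb F_{3^{2m}}}: a\in\mathbb F_{3^m}, b\in\mathbb F_{3^{2m}}, h\in\mathbb F_3\}$, let $d$ be its minimum nonzero Hamming weight, let $\mathbb D_d$ be the incidence structure on $\mathbb F_{3^{2m}}$ whose blocks are the supports of the weight-$d$ codewords, and let $\mathcal C_3(\mathbb D_d)$ be the $\mathbb F_3$-span of the incidence vectors of the blocks (entry $1$ on the block, $0$ elsewhere). *)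

From HB Require Import structures.
From mathcomp Require Import all_boot all_order all_algebra all_field.
Set Implicit Arguments. Unset Strict Implicit. Unset Printing Implicit Defensive.
Import GRing.Theory.
Local Open Scope ring_scope.

(* F plays the role of F_{3^{2m}}; F_3 is identified with the prime subfield
   {0,1,2} = {k%:R | k : 'I_3} of F (F has characteristic 3). *)
Section Defs.
Variables (F : finFieldType) (m : nat).

Definition tr2m (x : F) : F := \sum_(i < 2 * m) x ^+ (3 ^ i).

Definition in_sub (a : F) : bool := a ^+ (3 ^ m) == a.

Definition cw (a b : F) (k : 'I_3) : {ffun F -> F} :=
  [ffun t => tr2m (a * t ^+ (3 ^ m + 1) + b * t) + (k : nat)%:R].

Definition code : {set {ffun F -> F}} :=
  [set c | [exists a, exists b, exists k : 'I_3, in_sub a && (c == cw a b k)]].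

Definition support (c : {ffun F -> F}) : {set F} := [set t | c t != 0].
Definition wt (c : {ffun F -> F}) : nat := #|support c|.

Definition is_min_weight (d : nat) : Prop :=
  (exists2 c, c \in code & (c != 0) && (wt c == d)) /\
  (forall c, c \in code -> c != 0 -> (d <= wt c)%N).

Definition blocks (d : nat) : {set {set F}} :=
  [set B | [exists c in code, (wt c == d) && (B == support c)]].

(* the F_3-span C_3(D_d) of the incidence vectors of the blocks *)
Definition in_span_blocks (d : nat) (v : {ffun F -> F}) : Prop :=
  exists coef : {set F} -> 'I_3,
    forall t, v t = \sum_(B in blocks d) (coef B : nat)%:R * (t \in B)%:R.

End Defs.

From Pilot Require Import Defs.
From HB Require Import structures.
From mathcomp Require Import all_boot all_order all_algebra all_field.
From mathcomp Require Import ring zify.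
Set Implicit Arguments. Unset Strict Implicit. Unset Printing Implicit Defensive.
Import GRing.Theory.
Local Open Scope ring_scope.

(* Over F_3 the indicator of the support of a codeword c is c^2, and the code
   (hence the design D_d and its span) is invariant under every affine map
   t |-> lt + s, l <> 0.  So the squares c(lt + s)^2 of a minimum-weight
   codeword c = Tr(a t^(q+1) + bt) + k, q = 3^m, all lie in the span.
   - If a = b = 0, c is a nonzero constant of weight |F| > d: impossible.
   - If a = 0, b <> 0, two translates give Tr(bt) = (Tr(bt)+1)^2 - (Tr(bt)-1)^2.
   - If a <> 0, after completing the square c(t - s0) = Q(t) + w with the
     quadratic form Q(x) = Tr(a x^(q+1)) and polar form P; the differences
     c(t+s-s0)^2 - c(t-s-s0)^2 = (Q t + Q s + w) P(t,s) along s = 1, th, 1+th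
     combine to P(t, z) = Tr(2a z^q t) for a suitable z <> 0.
   In every case some Tr(yt), y <> 0, is in the span, and scaling t gives all. *)

Section CharThree.
Variable F : fieldType.
Hypothesis pcharF : 3 \in [pchar F].

Lemma three0 : 3%:R = 0 :> F. Proof. exact: pcharf0 pcharF. Qed.

Lemma two_eqN1 : 2%:R = -1 :> F.
Proof. by apply/eqP; rewrite -subr_eq0 opprK -(natrD _ 2 1) three0. Qed.

Lemma cubeD (x y : F) : (x + y) ^+ 3 = x ^+ 3 + y ^+ 3.
Proof.
have -> : (x + y) ^+ 3 = x ^+ 3 + y ^+ 3 + 3%:R * (x ^+ 2 * y + x * y ^+ 2) by ring.
by rewrite three0 mul0r addr0.
Qed.

Lemma frobD (x y : F) k : (x + y) ^+ (3 ^ k) = x ^+ (3 ^ k) + y ^+ (3 ^ k).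
Proof.
elim: k => [|k IHk]; first by rewrite !expr1.
by rewrite expnSr !exprM IHk cubeD.
Qed.

(* F_3 = {0, 1, 2} is the set of roots of x^3 - x. *)
Definition primeF : {pred F} := fun x => x ^+ 3 == x.

Lemma primeF_divring_closed : divring_closed primeF.
Proof.
have cubeN (x : F) : (- x) ^+ 3 = - x ^+ 3 by rewrite -mulN1r exprMn -signr_odd mulN1r.
split=> [|x y|x y]; rewrite !unfold_in /= ?expr1n // => /eqP hx /eqP hy.
  by rewrite cubeD cubeN hx hy.
by rewrite exprMn exprVn hx hy.
Qed.

HB.instance Definition _ := GRing.isDivringClosed.Build F primeF primeF_divring_closed.

Lemma primeFP x : reflect (x ^+ 3 = x) (x \in primeF).
Proof. by rewrite unfold_in; apply: eqP. Qed.

Lemma primeF_frob x k : x \in primeF -> x ^+ (3 ^ k) = x.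
Proof.
move/primeFP=> hx; elim: k => [|k IHk]; first by rewrite expr1.
by rewrite expnSr exprM IHk.
Qed.

Lemma primeF_nat x : x \in primeF -> exists k : 'I_3, x = (k : nat)%:R.
Proof.
move/primeFP=> hx.
have : x * (x - 1) * (x - 2%:R) == 0.
  have -> : x * (x - 1) * (x - 2%:R) = x ^+ 3 - x - 3%:R * (x ^+ 2 - x) by ring.
  by rewrite three0 mul0r subr0 hx subrr.
rewrite !mulf_eq0 !subr_eq0 => /orP[/orP[]|] /eqP ->.
- by exists ord0.
- by exists (inord 1); rewrite inordK.
- by exists (inord 2); rewrite inordK.
Qed.

Lemma primeF_indicator x : x \in primeF -> (x != 0)%:R = x ^+ 2.
Proof.
move/primeFP=> hx; have [->|x0] := eqVneq x 0; first by rewrite expr0n.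
by apply: (mulfI x0); rewrite -exprS hx mulr1.
Qed.

(* The polarization identity (x + y)^2 - (x - y)^2 = 4xy, with 4 = 1. *)
Lemma sqr_diff (x y : F) : (x + y) ^+ 2 - (x - y) ^+ 2 = x * y.
Proof.
have -> : (x + y) ^+ 2 - (x - y) ^+ 2 = x * y + 3%:R * (x * y) by ring.
by rewrite three0 mul0r addr0.
Qed.

Lemma natr_mod3 n : ((n %% 3)%N%:R : F) = n%:R.
Proof. by rewrite {2}(divn_eq n 3) natrD natrM three0 mulr0 add0r. Qed.

End CharThree.
Arguments primeF {F}.

Section Trace.
Variables (F : finFieldType) (m : nat).
Hypothesis pcharF : 3 \in [pchar F].
Hypothesis frob_id : forall x : F, x ^+ (3 ^ (2 * m)) = x.
Local Notation tr := (@tr2m F m).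

Lemma tr0 : tr 0 = 0.
Proof. by rewrite /tr2m big1 // => i _; rewrite expr0n expn_eq0. Qed.

Lemma trD x y : tr (x + y) = tr x + tr y.
Proof. by rewrite /tr2m -big_split; apply: eq_bigr => i _; rewrite frobD. Qed.

Lemma trN x : tr (- x) = - tr x.
Proof. by apply/eqP; rewrite -subr_eq0 opprK -trD addNr tr0. Qed.

Lemma tr_scale k x : k \in primeF -> tr (k * x) = k * tr x.
Proof.
move=> hk; rewrite /tr2m mulr_sumr; apply: eq_bigr => i _.
by rewrite exprMn primeF_frob.
Qed.

(* The trace is invariant under Frobenius, since cubing shifts its terms cyclically. *)
Lemma tr_frob x k : tr (x ^+ (3 ^ k)) = tr x.
Proof.
elim: k => [|k IHk]; first by rewrite expr1.
rewrite expnSr exprM -{}IHk /tr2m.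
have shift (y : F) : \sum_(i < 2 * m) (y ^+ 3) ^+ (3 ^ i) + y =
    \sum_(i < 2 * m) y ^+ (3 ^ i) + y ^+ (3 ^ (2 * m)).
  have := big_ord_recr (2 * m) (fun i : 'I_(2 * m).+1 => y ^+ (3 ^ i)).
  rewrite /= => <-; rewrite big_ord_recl expn0 expr1 addrC; congr (_ + _).
  by apply: eq_bigr => i _; rewrite -exprM -expnS.
by apply: (addIr (x ^+ (3 ^ k))); rewrite shift frob_id.
Qed.

Lemma tr_primeF x : tr x \in primeF.
Proof.
apply/primeFP; rewrite -[RHS](tr_frob x 1) expn1 /tr2m.
rewrite (big_morph (fun y : F => y ^+ 3) (cubeD pcharF) (expr0n _ _)).
by apply: eq_bigr => i _; rewrite -!exprM mulnC.
Qed.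

End Trace.

Lemma exists_nonroot (F : finFieldType) (p : {poly F}) :
  p != 0 -> (size p <= #|F|)%N -> exists x, ~~ root p x.
Proof.
move=> p_neq0 size_p; apply/existsP; rewrite -negb_forall; apply/negP=> /forallP allroot.
have := max_poly_roots p_neq0 (introT allP (fun x _ => allroot x)) (enum_uniq F).
by rewrite -cardE => /leq_trans/(_ size_p); rewrite ltnn.
Qed.

Section FiniteField.
Variables (F : finFieldType) (m : nat).
Hypotheses (m_gt0 : (0 < m)%N) (cardF : #|F| = (3 ^ (2 * m))%N).
Local Notation tr := (@tr2m F m).

Lemma pcharF3 : 3 \in [pchar F].
Proof. exact: (@card_finPcharP _ 3 (2 * m)). Qed.

Lemma frob_card (x : F) : x ^+ (3 ^ (2 * m)) = x.
Proof. by rewrite -cardF expf_card. Qed.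

(* The trace form is nondegenerate: Tr(y t) is a nonzero polynomial in t of
   degree 3^(2m-1) < |F|. *)
Lemma tr_nondeg y : y != 0 -> exists t, tr (y * t) != 0.
Proof.
move=> y_neq0.
pose p := \sum_(i < 2 * m) (y ^+ (3 ^ i)) *: ('X^(3 ^ i) : {poly F}).
have p_eval t : p.[t] = tr (y * t).
  rewrite /p horner_sum; apply: eq_bigr => i _.
  by rewrite hornerZ hornerXn exprMn.
have p_coef1 : p`_1 = y.
  have m2_gt0 : (0 < 2 * m)%N by rewrite muln_gt0.
  rewrite /p coef_sumMXn (bigD1 (Ordinal m2_gt0)) //=.
  rewrite expn0 expr1 big1 ?addr0 // => i /andP[/eqP pow_i_1 i_neq0].
  case/eqP: i_neq0; apply: val_inj => /=; move: pow_i_1.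
  by case: (nat_of_ord i) => // k; rewrite expnS; lia.
have p_neq0 : p != 0 by apply: contra_neq y_neq0 => p0; rewrite -p_coef1 p0 coef0.
have size_p : (size p <= #|F|)%N.
  apply: leq_trans (size_sum _ _ _) _; apply/bigmax_leqP => i _.
  apply: leq_trans (size_scale_leq _ _) _.
  by rewrite size_polyXn cardF ltn_exp2l.
have [t t_nonroot] := exists_nonroot p_neq0 size_p.
by exists t; rewrite -p_eval.
Qed.

Lemma tr_onto y v : y != 0 -> v \in primeF -> exists s, tr (y * s) = v.
Proof.
move=> y_neq0 v_prime; have [t tr_neq0] := tr_nondeg y_neq0.
have tr_prime := tr_primeF pcharF3 frob_card (y * t).
exists (v / tr (y * t) * t).
by rewrite mulrCA tr_scale ?rpred_div ?pcharF3 // divfK.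
Qed.

Lemma exists_nonprime : exists x : F, x \notin primeF.
Proof.
pose p : {poly F} := 'X^3 - 'X.
have size_p : size p = 4%N.
  by rewrite /p size_polyDl ?size_polyXn // size_polyN size_polyX.
have p_neq0 : p != 0 by rewrite -size_poly_eq0 size_p.
have [|x x_nonroot] := exists_nonroot p_neq0.
  by rewrite size_p cardF (@leq_trans (3 ^ 2)) // leq_exp2l //; lia.
by exists x; move: x_nonroot; rewrite /root /p !hornerE subr_eq0.
Qed.

(* The functional u |-> Tr(a u) is not constant outside F_3: otherwise it would
   vanish there (u and -u both lie outside F_3), and then everywhere. *)
Lemma exists_nonprime_tr a c : a != 0 -> exists2 u, u \notin primeF & tr (a * u) != c.
Proof.
move=> a_neq0; apply/exists_inP; rewrite -negb_forall_in; apply/negP=> /forall_inP const.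
have {}const u : u \notin primeF -> tr (a * u) = c by move=> /const /eqP.
have [x x_nonprime] := exists_nonprime.
have Nx_nonprime : - x \notin primeF by rewrite rpredN ?pcharF3.
have c0 : c = 0.
  have := const _ Nx_nonprime; rewrite mulrN trN ?pcharF3 // const // => /eqP.
  by rewrite eq_sym -subr_eq0 opprK -mulr2n -mulr_natl two_eqN1 ?pcharF3 // mulN1r oppr_eq0 => /eqP.
have [t tr_neq0] := tr_nondeg a_neq0.
have t_prime : t \in primeF by apply: contraR tr_neq0 => /const ->; rewrite c0.
have tx_nonprime : t + x \notin primeF by rewrite rpredDl ?pcharF3.
have := const _ tx_nonprime; rewrite mulrDr trD ?pcharF3 // (const x) // c0 addr0.
by move/eqP: tr_neq0.
Qed.

End FiniteField.

Section QuadraticForm.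
Variables (F : finFieldType) (m : nat).
Hypothesis pcharF : 3 \in [pchar F].
Hypothesis frob_id : forall x : F, x ^+ (3 ^ (2 * m)) = x.
Variable a : F.
Hypothesis a_sub : a ^+ (3 ^ m) = a.
Local Notation tr := (@tr2m F m).
Local Notation q := (3 ^ m)%N.

Definition quad (x : F) : F := tr (a * x ^+ (q + 1)).
Definition polar (x y : F) : F := tr (2%:R * a * y ^+ q * x).

Lemma frob_half_invol (x : F) : (x ^+ q) ^+ q = x.
Proof. by rewrite -exprM -expnD addnn -mul2n frob_id. Qed.

Lemma polar_sym (x y : F) : polar x y = polar y x.
Proof.
rewrite /polar -(tr_frob frob_id (2%:R * a * y ^+ q * x) m) !exprMn a_sub frob_half_invol.
by rewrite primeF_frob ?rpred_nat //; congr tr; ring.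
Qed.

Lemma quadD (x y : F) : quad (x + y) = quad x + quad y + polar x y.
Proof.
rewrite /quad /polar !addn1 !exprSr frobD //.
set u := a * y ^+ q * x.
have u_frob : u ^+ q = a * y * x ^+ q by rewrite /u !exprMn a_sub frob_half_invol.
have -> : a * ((x ^+ q + y ^+ q) * (x + y)) =
    a * (x ^+ q * x) + a * (y ^+ q * y) + 2%:R * a * y ^+ q * x + (u ^+ q - u).
  by rewrite u_frob /u; ring.
by rewrite !trD // trN // tr_frob // subrr addr0.
Qed.

Lemma quadN (x : F) : quad (- x) = quad x.
Proof.
by rewrite /quad -mulN1r exprMn -signr_odd addn1 /= oddX orbT mul1r.
Qed.

Lemma polarD (x y1 y2 : F) : polar x (y1 + y2) = polar x y1 + polar x y2.
Proof. by rewrite /polar -trD // frobD //; congr tr; ring. Qed.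

Lemma polarZ (x y k : F) : k \in primeF -> polar x (k * y) = k * polar x y.
Proof.
by move=> k_prime; rewrite /polar -tr_scale // exprMn primeF_frob //; congr tr; ring.
Qed.

Lemma polarN (x y : F) : polar x (- y) = - polar x y.
Proof. by rewrite -mulN1r polarZ ?mulN1r // rpredN // rpred1. Qed.

Lemma tr_quad_affine (b l s t : F) :
  tr (a * (l * t + s) ^+ (q + 1) + b * (l * t + s)) =
  tr (a * l ^+ (q + 1) * t ^+ (q + 1) + (2%:R * a * l * s ^+ q + b * l) * t)
  + tr (a * s ^+ (q + 1) + b * s).
Proof.
have := quadD (l * t) s; rewrite /quad /polar => expand.
rewrite !trD // expand -!trD //; congr tr; rewrite exprMn; ring.
Qed.

End QuadraticForm.

Section Code.
Variables (F : finFieldType) (m d : nat).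
Hypothesis pcharF : 3 \in [pchar F].
Hypothesis frob_id : forall x : F, x ^+ (3 ^ (2 * m)) = x.
Local Notation code := (@code F m).
Local Notation blocks := (@blocks F m d).
Local Notation q := (3 ^ m)%N.

Definition affine_comp (c : {ffun F -> F}) (l s : F) : {ffun F -> F} :=
  [ffun t => c (l * t + s)].

Lemma cw_code a b k : in_sub m a -> cw m a b k \in code.
Proof.
move=> a_sub; rewrite inE; apply/existsP; exists a; apply/existsP; exists b.
by apply/existsP; exists k; rewrite a_sub eqxx.
Qed.

Lemma code_primeF c t : c \in code -> c t \in primeF.
Proof.
rewrite inE => /existsP[a /existsP[b /existsP[k /andP[_ /eqP ->]]]].
by rewrite ffunE rpredD ?rpred_nat ?tr_primeF.
Qed.

Lemma code_affine c (l s : F) : c \in code -> affine_comp c l s \in code.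
Proof.
move=> c_code; have := c_code.
rewrite !inE => /existsP[a /existsP[b /existsP[k /andP[/eqP a_sub /eqP c_def]]]].
have [k' k'_def] := primeF_nat pcharF (code_primeF s c_code).
apply/existsP; exists (a * l ^+ (q + 1)).
apply/existsP; exists (2%:R * a * l * s ^+ q + b * l).
apply/existsP; exists k'; apply/andP; split.
  by rewrite /in_sub exprMn a_sub addn1 exprSr exprMn frob_half_invol // [l * _]mulrC.
apply/eqP/ffunP => t.
by rewrite c_def !ffunE -k'_def c_def ffunE tr_quad_affine // addrA.
Qed.

Lemma wt_affine c (l s : F) : l != 0 -> wt (affine_comp c l s) = wt c.
Proof.
move=> l_neq0; rewrite /wt.
have -> : Defs.support (affine_comp c l s) = (fun t => l * t + s) @^-1: Defs.support c.
  by apply/setP => t; rewrite !inE ffunE.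
by apply: card_preimset => x y /addIr /(mulfI l_neq0).
Qed.

Lemma support_block c : c \in code -> wt c = d -> Defs.support c \in blocks.
Proof. by move=> c_code wt_c; rewrite inE; apply/existsP; exists c; rewrite c_code wt_c !eqxx. Qed.

Definition affine_preim (l s : F) (B : {set F}) : {set F} := [set t | l * t + s \in B].

Lemma affine_preimK (l s : F) : l != 0 ->
  cancel (affine_preim l s) (affine_preim l^-1 (- (l^-1 * s))).
Proof.
move=> l_neq0 B; apply/setP => t; rewrite !inE.
by rewrite mulrDr mulrN !mulrA divff // !mul1r subrK.
Qed.

Lemma block_affine B (l s : F) :
  l != 0 -> B \in blocks -> affine_preim l s B \in blocks.
Proof.
move=> l_neq0; rewrite inE => /existsP[c /andP[c_code /andP[/eqP wt_c /eqP ->]]].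
have -> : affine_preim l s (Defs.support c) = Defs.support (affine_comp c l s).
  by apply/setP => t; rewrite !inE ffunE.
by apply: support_block; rewrite ?code_affine ?wt_affine.
Qed.

Lemma blocks_affine B (l s : F) :
  l != 0 -> (affine_preim l s B \in blocks) = (B \in blocks).
Proof.
move=> l_neq0; apply/idP/idP; last exact: block_affine.
by move/(block_affine (- (l^-1 * s)) (invr_neq0 l_neq0)); rewrite affine_preimK.
Qed.

Lemma support_indicator c t : c \in code -> (t \in Defs.support c)%:R = c t ^+ 2.
Proof. by move=> c_code; rewrite inE primeF_indicator ?code_primeF. Qed.

End Code.

Section Span.
Variables (F : finFieldType) (m d : nat).
Hypothesis pcharF : 3 \in [pchar F].
Hypothesis frob_id : forall x : F, x ^+ (3 ^ (2 * m)) = x.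
Local Notation code := (@code F m).
Local Notation blocks := (@blocks F m d).
Local Notation span := (@in_span_blocks F m d).

Lemma span_natcoef (coef : {set F} -> nat) :
  span [ffun t => \sum_(B in blocks) (coef B)%:R * (t \in B)%:R].
Proof.
exists (fun B => inord (coef B %% 3)) => t; rewrite ffunE; apply: eq_bigr => B _.
by rewrite inordK ?ltn_pmod // natr_mod3.
Qed.

Lemma spanD v w : span v -> span w -> span (v + w).
Proof.
move=> [cv v_def] [cw w_def].
suff -> : v + w = [ffun t => \sum_(B in blocks) (cv B + cw B)%:R * (t \in B)%:R].
  exact: span_natcoef.
apply/ffunP => t; rewrite !ffunE v_def w_def -big_split.
by apply: eq_bigr => B _; rewrite natrD mulrDl.
Qed.

Lemma spanN v : span v -> span (- v).
Proof.
move=> [cv v_def].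
suff -> : - v = [ffun t => \sum_(B in blocks) (2 * cv B)%:R * (t \in B)%:R].
  exact: span_natcoef.
apply/ffunP => t; rewrite !ffunE v_def -sumrN.
by apply: eq_bigr => B _; rewrite natrM two_eqN1 // mulN1r mulNr.
Qed.

Lemma span0 : span 0.
Proof.
suff -> : 0 = [ffun t : F => \sum_(B in blocks) (0%N)%:R * (t \in B)%:R :> F].
  exact: span_natcoef.
by apply/ffunP => t; rewrite !ffunE big1 // => B _; rewrite mul0r.
Qed.

Lemma span_block B : B \in blocks -> span [ffun t => (t \in B)%:R].
Proof.
move=> B_block; exists (fun B' => inord (B' == B)) => t.
rewrite ffunE (bigD1 B) //= eqxx inordK // mul1r big1 ?addr0 // => B' /andP[_ /negbTE->].
by rewrite inordK // mul0r.
Qed.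

(* C_3(D_d) is invariant under the affine group, since D_d is. *)
Lemma span_affine v (l s : F) : l != 0 -> span v -> span [ffun t => v (l * t + s)].
Proof.
move=> l_neq0 [coef v_def].
exists (fun B => coef (affine_preim l^-1 (- (l^-1 * s)) B)) => t.
rewrite ffunE v_def [RHS](reindex_inj (can_inj (affine_preimK s l_neq0))) /=.
apply: eq_big => [B | B _]; first by rewrite blocks_affine.
by rewrite affine_preimK // inE.
Qed.

Lemma span_codeword_sq c (l s : F) : c \in code -> wt c = d -> l != 0 ->
  span [ffun t => c (l * t + s) ^+ 2].
Proof.
move=> c_code wt_c l_neq0.
have := span_affine s l_neq0 (span_block (support_block c_code wt_c)).
by congr span; apply/ffunP => t; rewrite !ffunE (support_indicator pcharF frob_id _ c_code).
Qed.

(* One nonzero trace functional in C_3(D_d) yields all of them, by scaling t. *)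
Lemma span_tr_scale (y b : F) : y != 0 ->
  span [ffun t => tr2m m (y * t)] -> span [ffun t => tr2m m (b * t)].
Proof.
move=> y_neq0 span_y; have [->|b_neq0] := eqVneq b 0.
  suff -> : [ffun t => tr2m m ((0 : F) * t)] = 0 by exact: span0.
  by apply/ffunP => t; rewrite !ffunE mul0r tr0.
have l_neq0 : b / y != 0 by rewrite mulf_neq0 ?invr_neq0.
have := span_affine 0 l_neq0 span_y.
by congr span; apply/ffunP => t; rewrite !ffunE addr0 mulrA [y * _]mulrC divfK.
Qed.

End Span.

Section MinimumWeight.
Variables (F : finFieldType) (m d : nat).
Hypotheses (m_gt0 : (0 < m)%N) (cardF : #|F| = (3 ^ (2 * m))%N).
Hypothesis min_d : @is_min_weight F m d.
Local Notation tr := (@tr2m F m).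
Local Notation code := (@code F m).
Local Notation span := (@in_span_blocks F m d).
Local Notation q := (3 ^ m)%N.
Let pcharF := pcharF3 cardF.
Let frob_id := frob_card cardF.


(* The codeword Tr(t) is nonzero and vanishes at 0, so d < |F|. *)
Lemma min_weight_lt_card : (d < #|F|)%N.
Proof.
pose c := cw m (0 : F) 1 ord0.
have c_tr t : c t = tr t by rewrite ffunE mul0r add0r mul1r addr0.
have c_neq0 : c != 0.
  have [t tr_neq0] := tr_nondeg m_gt0 cardF (oner_neq0 F).
  by apply: contra_neq tr_neq0 => c0; rewrite mul1r -c_tr c0 ffunE.
have c_lt : (wt c < #|F|)%N.
  rewrite /wt -cardsT; apply: proper_card; rewrite properT; apply/eqP => suppT.
  have : (0 : F) \in Defs.support c by rewrite suppT inE.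
  by rewrite inE c_tr tr0 eqxx.
apply: leq_ltn_trans c_lt; apply: (proj2 min_d) c_neq0.
by rewrite cw_code // /in_sub expr0n expn_eq0.
Qed.

(* Linear case: if c = Tr(bt) + k has weight d, then Tr(bt) = c(t+s1)^2 - c(t+s2)^2
   for translates with c(t+s1) = Tr(bt) + 1 and c(t+s2) = Tr(bt) - 1. *)
Lemma span_tr_linear c (b : F) k : b != 0 -> c = cw m 0 b k -> wt c = d ->
  span [ffun t => tr (b * t)].
Proof.
move=> b_neq0 c_def wt_c.
have c_code : c \in code by rewrite c_def cw_code // /in_sub expr0n expn_eq0.
have c_shift t s : c (t + s) = tr (b * t) + (tr (b * s) + k%:R).
  by rewrite c_def ffunE mul0r add0r mulrDr trD // addrA.
have [s1 tr_s1] : exists s, tr (b * s) = 1 - k%:R.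
  by apply: tr_onto; rewrite // rpredB ?rpred1 ?rpred_nat.
have [s2 tr_s2] : exists s, tr (b * s) = - 1 - k%:R.
  by apply: tr_onto; rewrite // rpredB ?rpredN ?rpred1 ?rpred_nat.
have sq s := span_codeword_sq pcharF frob_id s c_code wt_c (oner_neq0 F).
have := spanD pcharF (sq s1) (spanN pcharF (sq s2)).
congr span; apply/ffunP => t; rewrite !ffunE !mul1r !c_shift tr_s1 tr_s2 !subrK.
by rewrite sqr_diff // mulr1.
Qed.

Section QuadraticCase.
Variables (a b : F) (k : 'I_3) (c : {ffun F -> F}).
Hypotheses (a_neq0 : a != 0) (a_sub : a ^+ q = a).
Hypotheses (c_def : c = cw m a b k) (wt_c : wt c = d).
Local Notation Q := (quad m a).
Local Notation P := (polar m a).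

(* Completing the square: after the shift by s0, c is Q plus a constant. *)
Let s0 := (b / (2%:R * a)) ^+ q.
Let w := c (- s0).

Lemma cw_centered t : c (t - s0) = Q t + w.
Proof.
have frobN (x : F) : (- x) ^+ q = - x ^+ q.
  by rewrite -mulN1r exprMn -signr_odd oddX orbT mulN1r.
have lin0 : 2%:R * a * 1 * (- s0) ^+ q + b * 1 = 0.
  rewrite frobN frob_half_invol // !mulr1 mulrN mulrC divfK ?addNr //.
  by rewrite mulf_neq0 // two_eqN1 // oppr_eq0 oner_neq0.
rewrite /w c_def !ffunE; have := tr_quad_affine pcharF frob_id a_sub b 1 (- s0) t.
by rewrite mul1r => ->; rewrite lin0 mul0r addr0 expr1n mulr1 -addrA.
Qed.

(* The difference D_s(t) = c(t+s-s0)^2 - c(t-s-s0)^2 equals (Q t + Q s + w) P(t, s). *)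
Lemma span_polar_diff s : span [ffun t => (Q t + Q s + w) * P t s].
Proof.
have c_code : c \in code by rewrite c_def cw_code // /in_sub a_sub.
have sq x := span_codeword_sq pcharF frob_id x c_code wt_c (oner_neq0 F).
have := spanD pcharF (sq (s - s0)) (spanN pcharF (sq (- s - s0))).
congr span; apply/ffunP => t; rewrite !ffunE !mul1r !addrA !cw_centered.
rewrite quadD // quadD // quadN // polarN // -sqr_diff //; congr (_ ^+ 2 - _ ^+ 2).
  by rewrite addrAC.
by rewrite addrAC [_ + - _]addrC addrA.
Qed.

(* A direction th outside F_3 with Q 1 + P(1, th) <> 0; it makes the vector z
   below nonzero, since 1 and th are independent over F_3. *)
Lemma exists_polar_direction : exists2 th, th \notin primeF & Q 1 + P 1 th != 0.
Proof.
have a2_neq0 : 2%:R * a != 0 by rewrite mulf_neq0 // two_eqN1 // oppr_eq0 oner_neq0.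
have [th th_nonprime tr_th] := exists_nonprime_tr m_gt0 cardF (- Q 1) a2_neq0.
exists th => //; rewrite polar_sym // /polar expr1n mulr1.
by apply: contra_neq tr_th => /eqP; rewrite addrC addr_eq0 => /eqP.
Qed.

(* With lambda, mu as below, the combination D_1 + D_th - D_(1+th) of the
   differences of span_polar_diff equals P(t, lambda + mu th) = Tr(y t). *)
Lemma span_tr_quadratic : exists2 y, y != 0 & span [ffun t => tr (y * t)].
Proof.
have [th th_nonprime nondeg] := exists_polar_direction.
have Q_prime x : Q x \in primeF by apply: tr_primeF.
have P_prime x y : P x y \in primeF by apply: tr_primeF.
pose lambda := - (Q th + P 1 th); pose mu := - (Q 1 + P 1 th).
have lambda_prime : lambda \in primeF by rewrite rpredN ?rpredD.
have mu_prime : mu \in primeF by rewrite rpredN ?rpredD.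
pose z := lambda * 1 + mu * th.
have z_neq0 : z != 0.
  apply: contraNneq th_nonprime => z0.
  have mu_neq0 : mu != 0 by rewrite oppr_eq0.
  have mu_th : mu * th = - lambda by apply/eqP; rewrite -addr_eq0 addrC -[lambda]mulr1 -/z z0.
  have -> : th = - lambda / mu by apply: (mulfI mu_neq0); rewrite mulrCA mulfV // mulr1 mu_th.
  by rewrite rpred_div // rpredN.
exists (2%:R * a * z ^+ q).
  by rewrite !mulf_neq0 ?expf_neq0 // two_eqN1 // oppr_eq0 oner_neq0.
have := spanD pcharF (span_polar_diff 1)
  (spanD pcharF (span_polar_diff th) (spanN pcharF (span_polar_diff (1 + th)))).
congr span; apply/ffunP => t; rewrite !ffunE.
have -> : tr (2%:R * a * z ^+ q * t) = P t z by [].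
rewrite /z !polarD // !polarZ // quadD // /lambda /mu; ring.
Qed.

End QuadraticCase.

Lemma wt_cw_const k : cw m (0 : F) 0 k != 0 -> wt (cw m (0 : F) 0 k) = #|F|.
Proof.
have cst t : cw m (0 : F) 0 k t = k%:R by rewrite ffunE !mul0r addr0 tr0 add0r.
move=> c_neq0; have k_neq0 : k%:R != 0 :> F.
  by apply: contra_neq c_neq0 => k0; apply/ffunP => t; rewrite cst k0 ffunE.
by rewrite /wt -cardsT; apply: eq_card => t; rewrite !inE cst k_neq0.
Qed.

Lemma exists_tr_in_span : exists2 y : F, y != 0 & span [ffun t => tr (y * t)].
Proof.
case: min_d => -[c c_code /andP[c_neq0 /eqP wt_c]] _.
move: (c_code); rewrite inE => /existsP[a /existsP[b /existsP[k /andP[/eqP a_sub /eqP c_def]]]].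
have [a0|a_neq0] := eqVneq a 0; last exact: span_tr_quadratic a_sub c_def wt_c.
have [b0|b_neq0] := eqVneq b 0.
  have c_const : c = cw m 0 0 k by rewrite c_def a0 b0.
  by have := min_weight_lt_card; rewrite -wt_c c_const wt_cw_const -?c_const ?ltnn.
exists b => //; apply: (span_tr_linear b_neq0 _ wt_c).
by rewrite c_def a0.
Qed.

End MinimumWeight.

Unset Implicit Arguments. Set Strict Implicit.

Theorem lemma3p6 (m : nat) (hm : (2 <= m)%N) (F : finFieldType)
  (hF : #|F| = (3 ^ (2 * m))%N) (d : nat) (hd : @is_min_weight F m d) :
  forall b : F, @in_span_blocks F m d [ffun t => @tr2m F m (b * t)].
Proof.
move=> b; have m_gt0 : (0 < m)%N by apply: ltnW.
have [y y_neq0 span_y] := exists_tr_in_span m_gt0 hF hd.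
exact: (span_tr_scale (pcharF3 hF) (frob_card hF) b y_neq0 span_y).
Qed.
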